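(* Let $G=(V,E)$ be a connected almost bipartite permutation graph. Then every hole in $G$ is a dominating set of $G$ (every vertex of $G$ lies on the hole or has a neighbor on it).
   Context: All graphs are finite, simple, undirected. A hole is an induced cycle on at least five vertices. $K_3$ is the triangle and $C_k$ the cycle on $k$ vertices. $T_2$ is the tree on 7 vertices obtained from the claw $K_{1,3}$ by subdividing each of its three edges once. $X_2$ is the 7-vertex graph obtained from a 4-cycle by attaching one new pendant vertex to each of three of its four vertices. $X_3$ is the 7-vertex graph obtained from the domino (two 4-cycles sharing exactly one edge, 6 vertices) by attaching one new pendant vertex to one endpoint of the shared edge. A graph is an almost bipartite permutation graph if it contains none of $T_2, X_2, X_3, K_3, C_5, C_6, C_7, C_8, C_9$ as an induced subgraph. *)

From mathcomp Require Import all_boot.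
Set Implicit Arguments. Unset Strict Implicit. Unset Printing Implicit Defensive.

Definition simple_graph (T : finType) (e : rel T) : Prop :=
  irreflexive e /\ symmetric e.

Definition connected_graph (T : finType) (e : rel T) : Prop :=
  forall x y : T, connect e x y.

Definition has_induced (T : finType) (e : rel T) (n : nat) (h : rel 'I_n) : Prop :=
  exists f : 'I_n -> T, injective f /\ forall i j : 'I_n, e (f i) (f j) = h i j.

Definition graph_of_edges (n : nat) (l : seq (nat * nat)) : rel 'I_n :=
  fun i j => ((nat_of_ord i, nat_of_ord j) \in l) || ((nat_of_ord j, nat_of_ord i) \in l).

Definition cycle_graph (k : nat) : rel (ordinal k) :=
  fun i j => (j == (i.+1 %% k) :> nat) || (i == (j.+1 %% k) :> nat).

Definition K3 : rel (ordinal 3) := @cycle_graph 3.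

(* T2: centre 0, subdivision vertices 1 2 3, leaves 4 5 6. *)
Definition T2 : rel 'I_7 :=
  @graph_of_edges 7 [:: (0,1); (0,2); (0,3); (1,4); (2,5); (3,6)].

(* X2: 4-cycle 0-1-2-3-0 with pendants 4 at 0, 5 at 1, 6 at 2. *)
Definition X2 : rel 'I_7 :=
  @graph_of_edges 7 [:: (0,1); (1,2); (2,3); (3,0); (0,4); (1,5); (2,6)].

(* X3: domino with rows 0-1-2 and 3-4-5, rungs 0-3, 1-4, 2-5 (shared edge 1-4),
   plus pendant 6 attached to 1. *)
Definition X3 : rel 'I_7 :=
  @graph_of_edges 7 [:: (0,1); (1,2); (3,4); (4,5); (0,3); (1,4); (2,5); (1,6)].

Definition almost_bipartite_permutation (T : finType) (e : rel T) : Prop :=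
  ~ has_induced e T2 /\ ~ has_induced e X2 /\ ~ has_induced e X3 /\
  ~ has_induced e K3 /\
  ~ has_induced e (@cycle_graph 5) /\ ~ has_induced e (@cycle_graph 6) /\
  ~ has_induced e (@cycle_graph 7) /\ ~ has_induced e (@cycle_graph 8) /\
  ~ has_induced e (@cycle_graph 9).

Definition is_hole (T : finType) (e : rel T) (H : {set T}) : Prop :=
  exists (k : nat) (f : 'I_k -> T),
    5 <= k /\ injective f /\ (forall i j : 'I_k, e (f i) (f j) = @cycle_graph k i j) /\
    H = [set f i | i : 'I_k].

Definition dominating (T : finType) (e : rel T) (D : {set T}) : Prop :=
  forall v : T, v \in D \/ exists2 u, u \in D & e v u.

(** A vertex at distance two from a hole C = c_0 ... c_(k-1) forces a forbidden
    induced subgraph.  If C were not dominating, connectivity would give an edge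
    w u with w undominated and u dominated; then u lies off C and is adjacent to
    some c_i.  The hole has k >= 6 vertices (C5 is excluded), and u sees neither
    c_(i-1) nor c_(i+1) (no triangles).  If u sees c_(i+2), then u c_i c_(i+1)
    c_(i+2) is an induced 4-cycle with pendants c_(i-1), w, c_(i+3): an X2; the
    case of c_(i-2) is symmetric.  Otherwise c_i is the centre of an induced T2
    with legs c_(i-1) c_(i-2), c_(i+1) c_(i+2) and u w. *)
From mathcomp Require Import all_boot.

Set Implicit Arguments.
Unset Strict Implicit.
Unset Printing Implicit Defensive.

Section InducedSubgraph.
Variables (T : finType) (e : rel T).

(* Checked on a [nat]-valued copy of the pattern, since enumerations of ['I_n]
   do not reduce by computation. *)
Definition twin_free (n : nat) (h : nat -> nat -> bool) : bool :=
  all (fun i => all (fun j => (i == j) || has (fun l => h i l != h j l) (iota 0 n))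
                    (iota 0 n)) (iota 0 n).

Lemma has_induced_nth n (h : rel 'I_n) (hn : nat -> nat -> bool) (s : seq T) x0 :
  h =2 (fun i j => hn i j) -> twin_free n hn ->
  (forall i j : 'I_n, e (nth x0 s i) (nth x0 s j) = h i j) -> has_induced e h.
Proof.
move=> h_hn tf_hn s_h; exists (fun i => nth x0 s i); split=> // i j sij.
apply: val_inj; move/allP/(_ i): tf_hn; rewrite mem_iota ltn_ord => /(_ isT).
move/allP/(_ j); rewrite mem_iota ltn_ord => /(_ isT) /orP[/eqP // | /hasP[l]].
rewrite mem_iota add0n => ltln.
by rewrite -[l]/(val (Ordinal ltln)) -!h_hn -!s_h sij eqxx.
Qed.

Lemma connected_cut_edge (D : {pred T}) x y :
  symmetric e -> connect e x y -> x \in D -> y \notin D ->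
  exists u w, [/\ e u w, u \in D & w \notin D].
Proof.
move=> e_sym xy Dx Dy.
case: (boolP [exists u, exists w, [&& e u w, u \in D & w \notin D]]).
  by case/existsP=> u /existsP[w /and3P[]]; exists u, w.
move/existsPn=> no_cut; have D_step u w : e u w -> u \in D -> w \in D.
  by move=> euw Du; apply: contraTT (existsPn (no_cut u) w) => Dw; rewrite euw Du Dw.
have cl_D : closed e D := intro_closed (sym_connect_sym e_sym) D_step.
by move: Dy; rewrite -(closed_connect cl_D xy) Dx.
Qed.

End InducedSubgraph.

Section SecondNeighbourhood.
Variables (T : finType) (e : rel T).
Hypotheses (e_irr : irreflexive e) (e_sym : symmetric e).
Hypothesis noK3 : ~ has_induced e K3.

Lemma triangle_free x y z : e x y -> e y z -> e x z = false.
Proof.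
move=> exy eyz; apply/negP=> exz; apply: noK3.
apply: (@has_induced_nth _ _ _ _ (fun i j => (j == i.+1 %% 3) || (i == j.+1 %% 3))
          [:: x; y; z] x) => //.
by move=> [[|[|[|//]]] ?] [[|[|[|//]]] ?]; rewrite /= ?e_irr // ?exy ?eyz ?exz // e_sym.
Qed.

Definition induced_P5 (p : nat -> T) : Prop :=
  forall a b, a <= 4 -> b <= 4 -> e (p a) (p b) = (b == a.+1) || (a == b.+1).

Section FiveVertexWindow.
Variables (p : nat -> T) (u w : T).
Hypotheses (p_P5 : induced_P5 p) (e_wu : e w u)
           (w_off_p : forall a, a <= 4 -> e w (p a) = false).

Lemma P5_square_has_X2 : e u (p 1) -> e u (p 3) -> has_induced e X2.
Proof.
move=> u1 u3.
have u0 : e u (p 0) = false by apply: triangle_free u1 _; rewrite p_P5.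
have u2 : e u (p 2) = false by apply: triangle_free u1 _; rewrite p_P5.
have u4 : e u (p 4) = false by apply: triangle_free u3 _; rewrite p_P5.
apply: (@has_induced_nth _ _ _ _
  (fun i j => ((i, j) \in [:: (0,1); (1,2); (2,3); (3,0); (0,4); (1,5); (2,6)]) ||
              ((j, i) \in [:: (0,1); (1,2); (2,3); (3,0); (0,4); (1,5); (2,6)]))
  [:: p 1; u; p 3; p 2; p 0; w; p 4] u) => //.
move=> [[|[|[|[|[|[|[|//]]]]]]] ?] [[|[|[|[|[|[|[|//]]]]]]] ?] /=;
  first [ by rewrite ?e_irr ?p_P5 ?u0 ?u1 ?u2 ?u3 ?u4 ?e_wu ?w_off_p
        | by rewrite e_sym ?p_P5 ?u0 ?u1 ?u2 ?u3 ?u4 ?e_wu ?w_off_p ].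
Qed.

Lemma P5_spider_has_T2 :
  e u (p 2) -> e u (p 0) = false -> e u (p 4) = false -> has_induced e T2.
Proof.
move=> u2 u0 u4.
have u1 : e u (p 1) = false by apply: triangle_free u2 _; rewrite p_P5.
have u3 : e u (p 3) = false by apply: triangle_free u2 _; rewrite p_P5.
apply: (@has_induced_nth _ _ _ _
  (fun i j => ((i, j) \in [:: (0,1); (0,2); (0,3); (1,4); (2,5); (3,6)]) ||
              ((j, i) \in [:: (0,1); (0,2); (0,3); (1,4); (2,5); (3,6)]))
  [:: p 2; p 1; p 3; u; p 0; p 4; w] u) => //.
move=> [[|[|[|[|[|[|[|//]]]]]]] ?] [[|[|[|[|[|[|[|//]]]]]]] ?] /=;
  first [ by rewrite ?e_irr ?p_P5 ?u0 ?u1 ?u2 ?u3 ?u4 ?e_wu ?w_off_p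
        | by rewrite e_sym ?p_P5 ?u0 ?u1 ?u2 ?u3 ?u4 ?e_wu ?w_off_p ].
Qed.

End FiveVertexWindow.

Hypotheses (noT2 : ~ has_induced e T2) (noX2 : ~ has_induced e X2).

Lemma P5_windows_no_distance_two (c : nat -> T) n u w :
  (forall j, induced_P5 (fun a => c (j + a))) -> e u (c (n + 3)) -> e w u ->
  (forall m, e w (c m) = false) -> False.
Proof.
move=> c_P5 u3 e_wu w_off; have w_off_win j a : a <= 4 -> e w (c (j + a)) = false.
  by move=> _; apply: w_off.
case u5: (e u (c (n + 5))).
  by apply/noX2/(P5_square_has_X2 (c_P5 (n + 2)) e_wu (w_off_win _)); rewrite -addnA.
case u1: (e u (c (n + 1))).
  exact/noX2/(P5_square_has_X2 (c_P5 n) e_wu (w_off_win _)).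
by apply/noT2/(P5_spider_has_T2 (c_P5 (n + 1)) e_wu (w_off_win _)); rewrite -addnA.
Qed.

End SecondNeighbourhood.

Section HoleWindows.
Variables (T : finType) (e : rel T) (k : nat) (f : 'I_k -> T).
Hypotheses (k_ge6 : 6 <= k) (f_cycle : forall i j, e (f i) (f j) = cycle_graph i j).

Let k_gt0 : 0 < k := leq_trans (isT : 0 < 6) k_ge6.

Definition hole_vertex (n : nat) : T := f (Ordinal (ltn_pmod n k_gt0)).

Lemma mem_hole_vertex n : hole_vertex n \in [set f i | i : 'I_k].
Proof. exact: imset_f. Qed.

Lemma hole_vertex_ord (i : 'I_k) : hole_vertex i = f i.
Proof. by congr f; apply: val_inj; rewrite /= modn_small. Qed.

Lemma hole_vertexDk n : hole_vertex (n + k) = hole_vertex n.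
Proof. by congr f; apply: val_inj; rewrite /= modnDr. Qed.

Lemma hole_window_P5 j : induced_P5 e (fun a => hole_vertex (j + a)).
Proof.
have modS m : (m %% k).+1 %% k = m.+1 %% k := modnDmr 1 m k.
have lt_k x : x <= 5 -> x < k := fun x5 => leq_ltn_trans x5 k_ge6.
move=> a b a4 b4; rewrite f_cycle /cycle_graph /= !modS -!addnS !eqn_modDl.
by rewrite !modn_small ?lt_k ?(leq_trans a4) ?(leq_trans b4).
Qed.

End HoleWindows.

Theorem proposition3p3 (T : finType) (e : rel T) :
  simple_graph e -> connected_graph e -> almost_bipartite_permutation e ->
  forall H : {set T}, is_hole e H -> dominating e H.
Proof.
move=> [e_irr e_sym] e_conn [noT2 [noX2 [_ [noK3 [noC5 _]]]]] _
       [k [f [k_ge5 [f_inj [f_cycle ->]]]]].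
have k_ge6 : 6 <= k.
  rewrite ltn_neqAle k_ge5 andbT; apply/eqP=> k5.
  by apply: noC5; subst k; exists f.
set C := [set f i | i : 'I_k]; set c := hole_vertex f k_ge6.
pose dominated := [pred v | (v \in C) || [exists y in C, e v y]].
move=> v; case: (boolP (v \in dominated)) => [/orP[|/existsP[y /andP[]]] | v_off].
- by left.
- by right; exists y.
exfalso.
have c0_dom : c 0 \in dominated by rewrite inE mem_hole_vertex.
have [u [w [e_uw u_dom w_off]]] := connected_cut_edge e_sym (e_conn (c 0) v) c0_dom v_off.
have e_wu : e w u by rewrite e_sym.
have u_off_C : u \notin C.
  by apply: contra w_off => uC; apply/orP; right; apply/existsP; exists u; rewrite uC.
have [i e_ui] : exists i, e u (f i).
  case/orP: u_dom => [uC | /existsP[_ /andP[/imsetP[i _ ->] e_ui]]]; last by exists i.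
  by rewrite uC in u_off_C.
apply: (P5_windows_no_distance_two e_irr e_sym noK3 noT2 noX2 (n := i + k - 3)
          (hole_window_P5 k_ge6 f_cycle) _ e_wu).
- by rewrite subnK ?hole_vertexDk ?hole_vertex_ord // ltn_addl // (leq_trans _ k_ge6).
- move=> m; apply: contraNF w_off => e_wc.
  by apply/orP; right; apply/existsP; exists (c m); rewrite mem_hole_vertex.
Qed.
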